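(* Let $\mathbb{K}\in\{\mathbb{R},\mathbb{C}\}$, $A\in\mathbb{K}^{n\times n}$, and let $Q_1,Q_2\in\mathbb{K}^{n\times n}$ be unitary (orthogonal if $\mathbb{K}=\mathbb{R}$). Let $(Q_1A^{*}Q_2A)^{1/2}$ denote a square root of $Q_1A^{*}Q_2A$. Then $$|\lambda_{\max}((Q_1A^{*}Q_2A)^{1/2})|\le\sigma_{\max}(A),\qquad |\lambda_{\min}((Q_1A^{*}Q_2A)^{1/2})|\ge\sigma_{\min}(A).$$
   Context: $\cdot^{*}$ denotes the conjugate transpose (transpose if $\mathbb{K}=\mathbb{R}$). For a square matrix $B$, $\lambda_{\max}(B)$ and $\lambda_{\min}(B)$ denote eigenvalues of $B$ of largest and smallest modulus, respectively; $\sigma_{\max}(A)$, $\sigma_{\min}(A)$ denote the largest and smallest singular values of $A$. *)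

From HB Require Import structures.
From mathcomp Require Import all_boot all_order all_algebra.
From mathcomp Require Export sesquilinear spectral.
Set Implicit Arguments. Unset Strict Implicit. Unset Printing Implicit Defensive.
Import Order.TTheory GRing.Theory Num.Theory.
Local Open Scope ring_scope.
Local Open Scope sesquilinear_scope.

(* Field K: any numClosedFieldType C (e.g. algC, complex R). *)

Definition singular_value (C : numClosedFieldType) (n : nat) (A : 'M[C]_n) (s : C) : Prop :=
  0 <= s /\ eigenvalue (A ^t* *m A) (s ^+ 2).

Definition is_sigma_max (C : numClosedFieldType) (n : nat) (A : 'M[C]_n) (s : C) : Prop :=
  singular_value A s /\ forall t, singular_value A t -> t <= s.

Definition is_sigma_min (C : numClosedFieldType) (n : nat) (A : 'M[C]_n) (s : C) : Prop :=
  singular_value A s /\ forall t, singular_value A t -> s <= t.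

Definition is_lambda_max (C : numClosedFieldType) (n : nat) (B : 'M[C]_n) (l : C) : Prop :=
  eigenvalue B l /\ forall m, eigenvalue B m -> `|m| <= `|l|.

Definition is_lambda_min (C : numClosedFieldType) (n : nat) (B : 'M[C]_n) (l : C) : Prop :=
  eigenvalue B l /\ forall m, eigenvalue B m -> `|l| <= `|m|.

From HB Require Import structures.
From mathcomp Require Import all_boot all_order all_algebra.
From mathcomp Require Import sesquilinear spectral.
Set Implicit Arguments. Unset Strict Implicit. Unset Printing Implicit Defensive.
Import Order.TTheory GRing.Theory Num.Theory.
Local Open Scope ring_scope.
Local Open Scope sesquilinear_scope.

(* If v S = l v with v != 0, then v (Q1 A^* Q2 A) = l^2 v.  Multiplication by
   a unitary matrix preserves the norm of a row vector, while multiplication by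
   A or by its adjoint scales it by a factor between sigma_min(A) and
   sigma_max(A), as one sees by expanding the vector in an orthonormal
   eigenbasis of A A^*.  Hence sigma_min(A)^2 <= |l|^2 <= sigma_max(A)^2. *)

Section EigenvalueMulmx.
Variables (F : fieldType) (n : nat).

Lemma eigenvalue0 (M : 'M[F]_n) : eigenvalue M 0 = (M \notin unitmx).
Proof.
by rewrite /eigenvalue /eigenspace raddf0 subr0 kermx_eq0 row_free_unit.
Qed.

Lemma eigenvalue_mulmxC (X Y : 'M[F]_n) a :
  eigenvalue (X *m Y) a -> eigenvalue (Y *m X) a.
Proof.
have [->|a_neq0] := eqVneq a 0; first by rewrite !eigenvalue0 !unitmx_mul andbC.
move=> /eigenvalueP[v vXY v_neq0]; apply/eigenvalueP; exists (v *m X).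
  by rewrite mulmxA -(mulmxA v) vXY -scalemxAl.
apply: contra_neq v_neq0 => vX0.
have /esym/eqP : v *m X *m Y = a *: v by rewrite -mulmxA.
by rewrite vX0 mul0mx scaler_eq0 (negPf a_neq0) => /eqP.
Qed.

Lemma eigenvalue_sqr (S : 'M[F]_n) l :
  eigenvalue S l -> eigenvalue (S *m S) (l ^+ 2).
Proof.
move=> /eigenvalueP[v vS v_neq0]; apply/eigenvalueP; exists v => //.
by rewrite mulmxA vS -scalemxAl vS scalerA.
Qed.

End EigenvalueMulmx.

Section DotmxBounds.
Variables (C : numClosedFieldType) (n : nat).
Implicit Types (x : 'rV[C]_n) (A M Q : 'M[C]_n).

Local Notation "''[' u ]" := (dotmx u u) : ring_scope.

Lemma dotmx_unitary x Q : Q \is unitarymx -> '[x *m Q] = '[x].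
Proof. by move=> Qu; rewrite !dotmxE trmx_mul map_mxM mulmxA mulmxtVK. Qed.

Lemma dotmx_mulmx x A : '[x *m A] = (x *m (A *m A^t*) *m x^t*) 0 0.
Proof. by rewrite dotmxE trmx_mul map_mxM !mulmxA. Qed.

Lemma dotmx_mulmx_spectral x A : exists d c : 'I_n -> C,
  [/\ forall i, 0 <= c i, forall i, 0 <= d i /\ eigenvalue (A *m A^t*) (d i),
      '[x] = \sum_i c i & '[x *m A] = \sum_i d i * c i].
Proof.
set H := A *m A^t*.
have /orthomx_spectralP H_spectral : H \is normalmx.
  by apply/normalmxP; rewrite /H trmx_mul map_mxM trmxCK.
set P := spectralmx H in H_spectral; set D := spectral_diag H in H_spectral.
have Pu : P \is unitarymx by apply: spectral_unitarymx.
rewrite invmx_unitary // in H_spectral.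
set y := x *m P^t*.
exists (fun i => D 0 i), (fun i => `|y 0 i| ^+ 2); split.
- by move=> i; apply: exprn_ge0.
- move=> i; set w := row i P.
  have w_norm : '[w] = 1 by have := row_unitarymxP Pu i i; rewrite eqxx.
  have wH : w *m H = D 0 i *: w.
    rewrite /w -row_mul H_spectral !mulmxA (unitarymxP Pu) mul1mx mul_diag_mx.
    by apply/rowP => j; rewrite !mxE.
  have D_norm : D 0 i = '[w *m A].
    by rewrite dotmx_mulmx -/H wH -scalemxAl mxE -dotmxE w_norm mulr1.
  split; first by rewrite D_norm dnorm_ge0.
  apply/eigenvalueP; exists w => //.
  by apply: contra_eqN w_norm => /eqP->; rewrite dotmxE mul0mx mxE eq_sym oner_eq0.
- have Pt_u : P^t* \is unitarymx by rewrite trmxC_unitary.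
  rewrite -(dotmx_unitary x Pt_u) -/y dotmxE mxE.
  by apply: eq_bigr => j _; rewrite !mxE normCK.
- rewrite dotmx_mulmx -/H H_spectral.
  have -> : x *m (P^t* *m diag_mx D *m P) *m x^t* = y *m diag_mx D *m y^t*.
    by rewrite /y trmx_mul map_mxM trmxCK !mulmxA.
  rewrite mul_mx_diag !mxE; apply: eq_bigr => j _.
  by rewrite !mxE normCK mulrAC mulrC mulrA.
Qed.

Lemma singular_value_sqrt_eigenvalue A d :
  0 <= d -> eigenvalue (A *m A^t*) d -> singular_value A (sqrtC d).
Proof.
by move=> d_ge0 /eigenvalue_mulmxC; split; rewrite ?sqrtC_ge0 ?sqrtCK.
Qed.

Lemma singular_value_trC A t : singular_value (A^t*) t <-> singular_value A t.
Proof.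
by rewrite /singular_value trmxCK; split=> -[t_ge0 /eigenvalue_mulmxC].
Qed.

Lemma is_sigma_max_trC A s : is_sigma_max A s -> is_sigma_max (A^t*) s.
Proof.
move=> [s_sv s_max]; split=> [|t /singular_value_trC]; last exact: s_max.
exact/singular_value_trC.
Qed.

Lemma is_sigma_min_trC A s : is_sigma_min A s -> is_sigma_min (A^t*) s.
Proof.
move=> [s_sv s_min]; split=> [|t /singular_value_trC]; last exact: s_min.
exact/singular_value_trC.
Qed.

Lemma dotmx_mulmx_le_sigma_max x A s :
  is_sigma_max A s -> '[x *m A] <= s ^+ 2 * '[x].
Proof.
move=> [[s_ge0 _] s_max]; have [d [c [c_ge0 d_eig -> ->]]] := dotmx_mulmx_spectral x A.
rewrite mulr_sumr; apply: ler_sum => i _; apply: ler_wpM2r => //.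
have [d_ge0 d_ev] := d_eig i.
have d_sv := singular_value_sqrt_eigenvalue d_ge0 d_ev.
rewrite -(sqrtCK (d i)) ler_pXn2r ?nnegrE ?sqrtC_ge0 //; exact: s_max.
Qed.

Lemma dotmx_mulmx_ge_sigma_min x A s :
  is_sigma_min A s -> s ^+ 2 * '[x] <= '[x *m A].
Proof.
move=> [[s_ge0 _] s_min]; have [d [c [c_ge0 d_eig -> ->]]] := dotmx_mulmx_spectral x A.
rewrite mulr_sumr; apply: ler_sum => i _; apply: ler_wpM2r => //.
have [d_ge0 d_ev] := d_eig i.
have d_sv := singular_value_sqrt_eigenvalue d_ge0 d_ev.
rewrite -(sqrtCK (d i)) ler_pXn2r ?nnegrE ?sqrtC_ge0 //; exact: s_min.
Qed.

Lemma eigenvalue_le_dotmx_bound M r m : 0 <= r ->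
  (forall x, '[x *m M] <= r ^+ 2 * '[x]) -> eigenvalue M m -> `|m| <= r.
Proof.
move=> r_ge0 M_bound /eigenvalueP[v vM v_neq0].
have := M_bound v; rewrite vM dnormZ ler_pM2r ?dnorm_gt0 //.
by rewrite ler_pXn2r ?nnegrE.
Qed.

Lemma eigenvalue_ge_dotmx_bound M r m : 0 <= r ->
  (forall x, r ^+ 2 * '[x] <= '[x *m M]) -> eigenvalue M m -> r <= `|m|.
Proof.
move=> r_ge0 M_bound /eigenvalueP[v vM v_neq0].
have := M_bound v; rewrite vM dnormZ ler_pM2r ?dnorm_gt0 //.
by rewrite ler_pXn2r ?nnegrE.
Qed.

Section UnitaryGram.
Variables (A Q1 Q2 : 'M[C]_n).
Hypotheses (Q1u : Q1 \is unitarymx) (Q2u : Q2 \is unitarymx).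

Lemma dotmx_unitary_gram_le s : is_sigma_max A s -> forall x,
  '[x *m (Q1 *m A^t* *m Q2 *m A)] <= (s ^+ 2) ^+ 2 * '[x].
Proof.
move=> /[dup] s_max [[s_ge0 _] _] x; rewrite !mulmxA.
apply: le_trans (dotmx_mulmx_le_sigma_max _ s_max) _.
rewrite dotmx_unitary // [(s ^+ 2) ^+ 2]expr2 -mulrA ler_wpM2l ?exprn_ge0 //.
by rewrite -(dotmx_unitary x Q1u); apply/dotmx_mulmx_le_sigma_max/is_sigma_max_trC.
Qed.

Lemma dotmx_unitary_gram_ge s : is_sigma_min A s -> forall x,
  (s ^+ 2) ^+ 2 * '[x] <= '[x *m (Q1 *m A^t* *m Q2 *m A)].
Proof.
move=> /[dup] s_min [[s_ge0 _] _] x; rewrite !mulmxA.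
apply: le_trans _ (dotmx_mulmx_ge_sigma_min _ s_min).
rewrite dotmx_unitary // [(s ^+ 2) ^+ 2]expr2 -mulrA ler_wpM2l ?exprn_ge0 //.
by rewrite -(dotmx_unitary x Q1u); apply/dotmx_mulmx_ge_sigma_min/is_sigma_min_trC.
Qed.

End UnitaryGram.
End DotmxBounds.

Theorem mainTheorem2 (C : numClosedFieldType) (n : nat) (A Q1 Q2 S : 'M[C]_n) :
  Q1 \is unitarymx -> Q2 \is unitarymx ->
  S *m S = Q1 *m A ^t* *m Q2 *m A ->
  (forall l s, is_lambda_max S l -> is_sigma_max A s -> `|l| <= s) /\
  (forall l s, is_lambda_min S l -> is_sigma_min A s -> s <= `|l|).
Proof.
move=> Q1u Q2u S_sqr; split=> l s [/eigenvalue_sqr + _] s_extremal;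
  rewrite S_sqr => l2_eig; have s_ge0 : 0 <= s by case: s_extremal => -[].
- have := eigenvalue_le_dotmx_bound (exprn_ge0 2 s_ge0)
    (dotmx_unitary_gram_le Q1u Q2u s_extremal) l2_eig.
  by rewrite normrX ler_pXn2r ?nnegrE.
- have := eigenvalue_ge_dotmx_bound (exprn_ge0 2 s_ge0)
    (dotmx_unitary_gram_ge Q1u Q2u s_extremal) l2_eig.
  by rewrite normrX ler_pXn2r ?nnegrE.
Qed.
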